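(* Let $x$ be a real number with $x \notin \mathbb{Q}$, and let $y_1, \dots, y_k$ be real numbers such that $1, y_1, \dots, y_k$ are linearly independent over $\mathbb{Q}$. Then there exist $k-1$ numbers among $x y_1, \dots, x y_k$ such that $1$, $x$ and these $k-1$ numbers are linearly independent over $\mathbb{Q}$. *)

From HB Require Import structures.
From mathcomp Require Import all_boot all_order all_algebra.
From mathcomp Require Import reals.
Set Implicit Arguments. Unset Strict Implicit. Unset Printing Implicit Defensive.
Import Order.TTheory GRing.Theory Num.Theory.
Local Open Scope ring_scope.

(* Linear independence over Q of a finite family of reals, given as a
   sequence (multiplicities count): the only rational linear combination
   that vanishes is the trivial one. *)
Definition Qlin_indep (R : realType) (s : seq R) : Prop :=
  forall c : 'I_(size s) -> rat,
    \sum_(i < size s) ratr (c i) * s`_i = 0 -> forall i, c i = 0.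

From HB Require Import structures.
From mathcomp Require Import all_boot all_order all_algebra.
From mathcomp Require Import reals ring.
From Stdlib Require Import Classical.
Set Implicit Arguments.
Unset Strict Implicit.
Unset Printing Implicit Defensive.
Import Order.TTheory GRing.Theory Num.Theory.
Local Open Scope ring_scope.

(* Since x <> 0, the family x, x y_1, ..., x y_k is linearly independent over
   Q. If 1 is not a rational combination of it, adjoining 1 keeps it
   independent and any k - 1 of the x y_i will do. Otherwise
   1 = b x + sum_i d_i x y_i with some d_j <> 0, since x is irrational, and the
   Steinitz exchange of x y_j for 1 keeps the family independent. *)

Lemma enum_option (T : finType) : enum {: option T} = None :: map Some (enum T).
Proof. by rewrite [LHS]enumT unlock /= /option_enum enumT. Qed.

Lemma sum_option (V : nmodType) (I : finType) (G : option I -> V) :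
  \sum_o G o = G None + \sum_i G (Some i).
Proof.
rewrite (bigD1 None) //= (reindex_omap Some id) => [|[]//].
by congr (_ + _); apply: eq_bigl => i; rewrite eqxx.
Qed.

Section RationalIndependence.
Variable F : numFieldType.
Implicit Types (I J : finType).

Definition Qcomb I (c : I -> rat) (v : I -> F) : F := \sum_i ratr (c i) * v i.

Definition Qfree I (v : I -> F) : Prop :=
  forall c : I -> rat, Qcomb c v = 0 -> forall i, c i = 0.

Lemma Qfree_comp_inj I J (v : I -> F) (f : J -> I) :
  injective f -> Qfree v -> Qfree (v \o f).
Proof.
move=> inj_f free_v c c0 j.
pose c' i := \sum_(l | f l == i) c l.
have c'E l : c' (f l) = c l.
  by rewrite /c' (big_pred1 l) // => l'; rewrite (inj_eq inj_f).
have : Qcomb c' v = 0.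
  rewrite -{}c0 /Qcomb (partition_big f predT) //=; apply: eq_bigr => i _.
  by rewrite rmorph_sum mulr_suml; apply: eq_bigr => l /eqP <-.
by move/free_v/(_ (f j)); rewrite c'E.
Qed.

Lemma Qfree_comp_bij I J (v : I -> F) (f : J -> I) :
  bijective f -> Qfree (v \o f) -> Qfree v.
Proof.
move=> bij_f free_vf c c0 i; have [g _ gK] := bij_f.
rewrite -[i]gK; apply: (free_vf (c \o f)); rewrite -{}c0 /Qcomb.
by rewrite [RHS](reindex f) //; apply: onW_bij.
Qed.

Lemma Qfree_scale I (v : I -> F) (x : F) :
  x != 0 -> Qfree v -> Qfree (fun i => x * v i).
Proof.
move=> x0 free_v c c0; apply: free_v.
have : x * Qcomb c v = 0.
  by rewrite -{}c0 /Qcomb mulr_sumr; apply: eq_bigr => i _; rewrite mulrCA.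
by move/eqP; rewrite mulf_eq0 (negbTE x0) => /eqP.
Qed.

Lemma Qfree_option I (v : I -> F) (u : F) :
  Qfree v -> (forall d, Qcomb d v != u) -> Qfree (oapp v u).
Proof.
move=> free_v u_notin_span c; rewrite /Qcomb sum_option /= => c0.
have cN : c None = 0.
  apply/eqP; apply: contraTT (u_notin_span (fun i => - c (Some i) / c None)).
  rewrite negbK => cN; apply/eqP.
  have cN' : ratr (c None) != 0 :> F by rewrite fmorph_eq0.
  move/eqP: c0; rewrite addrC addr_eq0 => /eqP c0.
  have -> : Qcomb (fun i => - c (Some i) / c None) v =
      - (ratr (c None))^-1 * \sum_i ratr (c (Some i)) * v i.
    rewrite /Qcomb mulr_sumr; apply: eq_bigr => i _.
    by rewrite rmorphM rmorphN fmorphV; ring.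
  by rewrite c0 mulNr mulrN opprK mulKf.
move: c0; rewrite cN rmorph0 mul0r add0r => /(free_v (c \o Some)) cS.
by case.
Qed.

Lemma Qfree_exchange I (v : I -> F) (d : I -> rat) (j : I) :
  Qfree v -> d j != 0 -> Qfree (fun i => if i == j then Qcomb d v else v i).
Proof.
move=> free_v dj c; set u := Qcomb d v => c0.
have uE : u = ratr (d j) * v j + \sum_(i | i != j) ratr (d i) * v i.
  by rewrite /u /Qcomb (bigD1 j).
(* Substituting u for v j turns the relation c into the relation e on v. *)
pose e i := if i == j then c j * d j else c i + c j * d i.
have e0 : forall i, e i = 0.
  apply: free_v; rewrite -{}c0 /Qcomb (bigD1 j) //= [RHS](bigD1 j) //= /e !eqxx.
  rewrite [in RHS](eq_bigr (fun i => ratr (c i) * v i)) => [|i /negbTE -> //].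
  under eq_bigr => i /negbTE -> do rewrite rmorphD rmorphM mulrDl -mulrA.
  by rewrite big_split /= -mulr_sumr rmorphM uE; ring.
have cj : c j = 0.
  apply/eqP; move: (e0 j); rewrite /e eqxx => /eqP.
  by rewrite mulf_eq0 (negbTE dj) orbF.
by move=> i; have := e0 i; rewrite /e cj !mul0r addr0; case: eqP => [-> _|].
Qed.

End RationalIndependence.

Section SequenceIndependence.
Variable R : realType.

Lemma Qlin_indep_map_tnth (I : Type) (w : I -> R) (s : seq I) :
  Qlin_indep (map w s) <-> Qfree (w \o tnth (in_tuple s)).
Proof.
have nthE (i : 'I_(size s)) : (map w s)`_i = (w \o tnth (in_tuple s)) i.
  pose i0 := tnth (in_tuple s) i.
  by rewrite /= (tnth_nth i0) (nth_map i0).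
rewrite /Qlin_indep size_map /Qfree /Qcomb.
split=> free_s c; last by under eq_bigr do rewrite nthE; apply: free_s.
by under eq_bigr do rewrite -nthE; apply: free_s.
Qed.

Lemma Qlin_indep_map (I : finType) (w : I -> R) (s : seq I) :
  uniq s -> Qfree w -> Qlin_indep (map w s).
Proof.
move=> /(tuple_uniqP (in_tuple s)) inj_s.
by move=> /(Qfree_comp_inj inj_s) /Qlin_indep_map_tnth.
Qed.

Lemma Qfree_of_enum (I : finType) (w : I -> R) :
  Qlin_indep (map w (enum I)) -> Qfree w.
Proof.
move/Qlin_indep_map_tnth; apply: Qfree_comp_bij; apply: inj_card_bij.
  exact/tuple_uniqP/enum_uniq.
by rewrite card_ord -cardE.
Qed.

End SequenceIndependence.

Lemma exists_card_predn (k : nat) : exists S : {set 'I_k}, #|S| = k.-1.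
Proof.
case: k => [|k]; first by exists set0; rewrite cards0.
by exists [set~ ord0]; rewrite cardsC1 card_ord.
Qed.

Section IrrationalMultiples.
Variables (R : realType) (k : nat) (x : R) (y : 'I_k -> R).
Hypothesis x_irrational : forall q : rat, x <> ratr q.
Hypothesis y_indep : Qlin_indep (1 :: [seq y i | i <- enum 'I_k]).

Let xy (o : option 'I_k) : R := x * oapp y 1 o.

Lemma Qfree_xy : Qfree xy.
Proof.
apply: Qfree_scale.
  by apply/eqP => x0; apply: (@x_irrational 0); rewrite x0 rmorph0.
by apply: Qfree_of_enum; rewrite enum_option /= -map_comp.
Qed.

Lemma Qcomb_xy_eq1_coord_neq0 (d : option 'I_k -> rat) :
  Qcomb d xy = 1 -> exists j, d (Some j) != 0.
Proof.
case: (pickP (fun j => d (Some j) != 0)) => [j dj _|dS0]; first by exists j.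
rewrite /Qcomb sum_option big1 => [|j _]; last first.
  by rewrite (eqP (negbFE (dS0 j))) rmorph0 mul0r.
rewrite addr0 /xy /= mulr1 => dx.
have dN0 : ratr (d None) != 0 :> R.
  by apply/eqP => dN0; move/eqP: dx; rewrite dN0 mul0r eq_sym oner_eq0.
case: (@x_irrational (d None)^-1).
by rewrite fmorphV -[LHS](mulKf dN0) dx mulr1.
Qed.

Lemma subset_indep_of_one_in_span (d : option 'I_k -> rat) : Qcomb d xy = 1 ->
  exists S : {set 'I_k},
    #|S| = k.-1 /\ Qlin_indep (1 :: x :: [seq x * y i | i <- enum S]).
Proof.
move=> d1; have [j dj] := Qcomb_xy_eq1_coord_neq0 d1.
exists [set~ j]; split; first by rewrite cardsC1 card_ord.
have := Qfree_exchange Qfree_xy dj.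
set w := (fun o => _) => free_w.
have -> : 1 :: x :: [seq x * y i | i <- enum [set~ j]] =
    map w (Some j :: None :: map Some (enum [set~ j])).
  rewrite /= /w eqxx d1 /xy /= mulr1 -map_comp; congr (_ :: _ :: _).
  apply/eq_in_map => i; rewrite mem_enum in_setC1 => ij /=.
  by rewrite (inj_eq (@Some_inj _)) (negbTE ij).
apply: Qlin_indep_map free_w.
rewrite /= !inE (mem_map (@Some_inj _)) mem_enum in_setC1 eqxx /=.
rewrite (map_inj_uniq (@Some_inj _)) enum_uniq andbT.
by apply/mapP => -[].
Qed.

Lemma subset_indep_of_one_notin_span : (forall d, Qcomb d xy != 1) ->
  exists S : {set 'I_k},
    #|S| = k.-1 /\ Qlin_indep (1 :: x :: [seq x * y i | i <- enum S]).
Proof.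
move=> one_notin; have [S cardS] := exists_card_predn k.
exists S; split=> //.
have -> : 1 :: x :: [seq x * y i | i <- enum S] =
    map (oapp xy 1) (None :: Some None :: map (Some \o Some) (enum S)).
  by rewrite /= /xy mulr1 -map_comp.
apply: Qlin_indep_map (Qfree_option Qfree_xy one_notin).
rewrite /= inE (map_inj_uniq (inj_comp (@Some_inj _) (@Some_inj _))).
rewrite enum_uniq andbT /=.
by apply/andP; split; apply/mapP => -[].
Qed.

End IrrationalMultiples.

Theorem lemma1 (R : realType) (k : nat) (x : R) (y : 'I_k -> R) :
  (forall q : rat, x <> ratr q) ->
  Qlin_indep (1 :: [seq y i | i <- enum 'I_k]) ->
  exists S : {set 'I_k},
    #|S| = k.-1 /\ Qlin_indep (1 :: x :: [seq x * y i | i <- enum S]).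
Proof.
move=> x_irr y_indep.
have [[d d1]|one_notin] :=
  classic (exists d, Qcomb d (fun o => x * oapp y 1 o) = 1).
  exact: (subset_indep_of_one_in_span x_irr y_indep d1).
apply: subset_indep_of_one_notin_span x_irr y_indep _ => d.
by apply/eqP => d1; apply: one_notin; exists d.
Qed.
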